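(* For each event $k$, let $\mathcal{P}^{\Theta}_k\subseteq\mathcal{P}$ be a set of accumulators (a ''bounding box'') containing $\operatorname{round}(W(\mathbf{x}_k,t_k;\boldsymbol{\theta}))$ for every $\boldsymbol{\theta}\in\Theta$. Assume the nesting property: for all $\boldsymbol{\theta}\in\Theta$ and all $1\le i<j$, if $\operatorname{round}(W(\mathbf{x}_i,t_i;\boldsymbol{\theta}))=\operatorname{round}(W(\mathbf{x}_j,t_j;\boldsymbol{\theta}))$ then $\mathcal{P}^{\Theta}_i\subseteq\mathcal{P}^{\Theta}_j$. Define recursively the upper-bound IWE $\overline{I}^n:\mathcal{P}\to\mathbb{Z}_{\ge0}$ and numbers $Q^{n}$, $\overline{L_n}$ by $\overline{I}^0\equiv 0$, $\overline{L_0}=0$, and for $n\ge 0$: $$Q^{n}=\max_{\mathbf{p}\in\mathcal{P}^{\Theta}_{n+1}}\overline{I}^{n}(\mathbf{p}),\qquad \overline{L_{n+1}}=\overline{L_n}+1+2Q^{n},$$ and $\overline{I}^{n+1}$ is obtained from $\overline{I}^{n}$ by adding $1$ at one accumulator $\boldsymbol{\nu}_{n+1}\in\mathcal{P}^{\Theta}_{n+1}$ attaining the maximum $Q^{n}$. Then for every $N\ge 0$ and every $\boldsymbol{\theta}\in\Theta$ one has $Q^{N}\ge I^{N}\big(\operatorname{round}(W(\mathbf{x}_{N+1},t_{N+1};\boldsymbol{\theta}));\boldsymbol{\theta}\big)$ (when event $N+1$ exists) and $$L^{\mathrm{SoS}}_{N}(\boldsymbol{\theta})\le\overline{L_N};\quad\text{in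 particular}\quad \max_{\boldsymbol{\theta}\in\Theta}L^{\mathrm{SoS}}_N(\boldsymbol{\theta})\le\overline{L_N}.$$
   Context: Events: a finite sequence $e_k=(\mathbf{x}_k,t_k)$, $k=1,2,\dots$, with $\mathbf{x}_k\in\mathbb{R}^2$ and timestamps $t_1\le t_2\le\cdots$. A warping function $W(\mathbf{x},t;\boldsymbol{\theta})\in\mathbb{R}^2$ depends on a parameter $\boldsymbol{\theta}$ ranging over a set $\Theta$ (the search space). The accumulators form a finite set $\mathcal{P}\subset\mathbb{Z}^2$ of lattice points; it is assumed that for every event $k$ and every $\boldsymbol\theta\in\Theta$, no coordinate of $W(\mathbf{x}_k,t_k;\boldsymbol{\theta})$ has fractional part exactly $1/2$ and the nearest lattice point $\operatorname{round}(W(\mathbf{x}_k,t_k;\boldsymbol{\theta}))$ lies in $\mathcal{P}$. The indicator $\mathbf{1}(\mathbf{p}-\mathbf{x}')$ equals $1$ if both coordinates of $\mathbf{p}-\mathbf{x}'$ have absolute value $<1/2$ and $0$ otherwise. The image of warped events (IWE) built from the first $N$ events is $I^N(\mathbf{p};\boldsymbol{\theta})=\sum_{k=1}^N\mathbf{1}(\mathbf{p}-W(\mathbf{x}_k,t_k;\boldsymbol{\theta}))$ for $\mathbf p\in\mathcal P$ (so $I^0\equiv 0$). The sum-of-squares contrast over the first $N$ events is $L^{\mathrm{SoS}}_N(\boldsymbol{\theta})=\sum_{\mathbf{p}\in\mathcal{P}}I^N(\mathbf{p};\boldsymbol{\theta})^2$. *)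

(* Reals: an arbitrary archimedean real field R (Stdlib's R
   and every realType are instances), so that Num.floor is available. *)
From HB Require Import structures.
From mathcomp Require Import all_boot all_order all_algebra.
Set Implicit Arguments. Unset Strict Implicit. Unset Printing Implicit Defensive.
Import Order.TTheory GRing.Theory Num.Theory.
Local Open Scope ring_scope.

Section Defs.
Variable R : archiRealFieldType.

Definition lat := (int * int)%type.

Definition half_frac (r : R) : Prop := exists z : int, r = z%:~R + 2^-1.

(* nearest integer of r (meaningful when r is not half-integral) *)
Definition round1 (r : R) : int := Num.floor (r + 2^-1).
Definition round2 (w : R * R) : lat := (round1 w.1, round1 w.2).

Definition ind (p : lat) (w : R * R) : nat :=
  ((`|p.1%:~R - w.1| < 2^-1) && (`|p.2%:~R - w.2| < 2^-1))%R.

Variables (Theta : Type) (W : R * R -> R -> Theta -> R * R)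
          (x : nat -> R * R) (t : nat -> R).

Definition warped (k : nat) (th : Theta) : R * R := W (x k) (t k) th.

Definition IWE (N : nat) (p : lat) (th : Theta) : nat :=
  (\sum_(1 <= k < N.+1) ind p (warped k th))%N.

Definition LSoS (P : seq lat) (N : nat) (th : Theta) : nat :=
  (\sum_(p <- P) (IWE N p th) ^ 2)%N.
End Defs.

Fixpoint Ibar (nu : nat -> lat) (n : nat) (p : lat) : nat :=
  match n with
  | 0 => 0
  | n'.+1 => (Ibar nu n' p + (p == nu n'.+1))%N
  end.

Definition Qn (B : nat -> seq lat) (nu : nat -> lat) (n : nat) : nat :=
  (\max_(p <- B n.+1) Ibar nu n p)%N.

Fixpoint Lbar (B : nat -> seq lat) (nu : nat -> lat) (n : nat) : nat :=
  match n with
  | 0 => 0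
  | n'.+1 => (Lbar B nu n' + 1 + 2 * Qn B nu n')%N
  end.

(** For a fixed
    [th], the number of earlier events landing on the accumulator of event [j]
    is bounded by the maximum of [Ibar] over the box of [j]: whenever such an
    earlier event [i] occurs, nesting gives [B i <= B j], and [Ibar] was just
    raised to [Q + 1] inside [B i].  Since adding one event at [p] increases the
    sum of squares by [2 I(p) + 1], the bound [I(p) <= Q] on the accumulator
    actually hit yields [LSoS <= Lbar] by induction. *)
From HB Require Import structures.
From mathcomp Require Import all_boot all_order all_algebra.
From mathcomp Require Import lra ring.
Set Implicit Arguments. Unset Strict Implicit.
Import Order.TTheory GRing.Theory Num.Theory.
Local Open Scope ring_scope.

Lemma dist_lt_half_round1 (R : archiRealFieldType) (z : int) (r : R) :
  ~ half_frac r -> (`|z%:~R - r| < 2^-1) = (z == round1 r).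
Proof.
move=> not_half; rewrite /round1 eq_sym floor_eq ltr_distl intrD rmorph1.
have h2 : (2^-1 : R) * 2 = 1 by rewrite mulVf // pnatr_eq0.
set h := (2^-1 : R) in h2 *.
apply/idP/idP => /andP[lo hi]; apply/andP; split; try lra.
have z_neq : (z%:~R : R) != r + h.
  apply/eqP => E; apply: not_half; exists (z - 1).
  by rewrite intrD rmorphN rmorph1 E; lra.
have : (z%:~R : R) < r + h by rewrite lt_neqAle z_neq.
lra.
Qed.

Lemma ind_round2 (R : archiRealFieldType) (p : lat) (w : R * R) :
  ~ half_frac w.1 -> ~ half_frac w.2 -> ind p w = (p == round2 w) :> nat.
Proof.
by case: p => a b h1 h2; rewrite /ind /round2 /= !dist_lt_half_round1.
Qed.

Lemma sum_sq_add_indicator (T : eqType) (s : seq T) (f : T -> nat) (a : T) :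
  uniq s -> a \in s ->
  (\sum_(p <- s) (f p + (p == a)) ^ 2 = \sum_(p <- s) f p ^ 2 + (2 * f a + 1))%N.
Proof.
move=> s_uniq a_in.
have sq_bump p : ((f p + (p == a)) ^ 2 = f p ^ 2 + (p == a) * (2 * f p + 1))%N.
  by case: (p == a); rewrite /= ?addn0 ?mul0n ?mul1n ?addn0 //; ring.
under eq_bigr => p _ do rewrite sq_bump.
rewrite big_split /= [X in (_ + X)%N](bigD1_seq a a_in s_uniq) /= eqxx mul1n.
congr (_ + _)%N; rewrite big1 ?addn0 // => p /negPf ->.
by rewrite mul0n.
Qed.

Section NestedBoxes.
Variables (w nu : nat -> lat) (B : nat -> seq lat) (M : nat).

Definition hits (n : nat) (p : lat) : nat := (\sum_(1 <= k < n.+1) (p == w k))%N.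

Lemma hits0 p : hits 0 p = 0%N.
Proof. by rewrite /hits big_geq. Qed.

Lemma hitsS n p : hits n.+1 p = (hits n p + (p == w n.+1))%N.
Proof. by rewrite /hits big_nat_recr. Qed.

Hypothesis nested : forall i j, (1 <= i)%N -> (i < j)%N -> (j <= M)%N ->
  w i = w j -> {subset B i <= B j}.
Hypothesis nu_argmax : forall n, (n < M)%N ->
  nu n.+1 \in B n.+1 /\ Ibar nu n (nu n.+1) = Qn B nu n.

Lemma hits_le_box_max n j : (n < j <= M)%N ->
  (hits n (w j) <= \max_(q <- B j) Ibar nu n q)%N.
Proof.
elim: n j => [|n IH] j /andP[nj jM]; first by rewrite hits0.
have nM : (n < M)%N by apply: leq_trans (ltnW nj) jM.
rewrite hitsS; case: eqP => [w_eq | _] /=.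
- have [nu_in nu_max] := nu_argmax nM.
  have sub : {subset B n.+1 <= B j} by apply: nested => //; rewrite w_eq.
  apply: (bigmaxn_sup_seq (nu n.+1)); [exact: sub | by [] |].
  rewrite /= eqxx nu_max leq_add2r w_eq.
  by apply: IH; rewrite ltnSn.
- rewrite addn0; apply: leq_trans (IH j _) _; first by rewrite jM andbT ltnW.
  apply/bigmax_leqP_seq => q q_in _.
  by apply: (bigmaxn_sup_seq q) => //=; apply: leq_addr.
Qed.

Lemma hits_le_Qn n : (n < M)%N -> (hits n (w n.+1) <= Qn B nu n)%N.
Proof. by move=> nM; apply: hits_le_box_max; rewrite ltnSn. Qed.

Variable P : seq lat.
Hypothesis P_uniq : uniq P.
Hypothesis w_in_P : forall k, (1 <= k <= M)%N -> w k \in P.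

Lemma sum_sq_hits_le_Lbar n : (n <= M)%N ->
  (\sum_(p <- P) hits n p ^ 2 <= Lbar B nu n)%N.
Proof.
elim: n => [|n IH] nM; first by rewrite big1_seq // => p _; rewrite hits0.
under eq_bigr => p _ do rewrite hitsS.
rewrite sum_sq_add_indicator ?w_in_P //= -addnA.
apply: leq_add (IH (ltnW nM)) _.
by rewrite addnC leq_add2l leq_mul2l hits_le_Qn ?orbT.
Qed.

End NestedBoxes.

Theorem theorem2
  (R : archiRealFieldType) (Theta : Type) (inTheta : Theta -> Prop)
  (W : R * R -> R -> Theta -> R * R)
  (M : nat) (x : nat -> R * R) (t : nat -> R)
  (P : seq lat) (B : nat -> seq lat) (nu : nat -> lat) :
  (forall i j, (1 <= i)%N -> (i <= j)%N -> (j <= M)%N -> t i <= t j) ->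
  uniq P ->
  (forall k th, (1 <= k <= M)%N -> inTheta th ->
     ~ half_frac (warped W x t k th).1 /\ ~ half_frac (warped W x t k th).2
     /\ round2 (warped W x t k th) \in P) ->
  (forall k, (1 <= k <= M)%N -> {subset B k <= P}) ->
  (forall k th, (1 <= k <= M)%N -> inTheta th ->
     round2 (warped W x t k th) \in B k) ->
  (forall th i j, inTheta th -> (1 <= i)%N -> (i < j)%N -> (j <= M)%N ->
     round2 (warped W x t i th) = round2 (warped W x t j th) ->
     {subset B i <= B j}) ->
  (forall n, (n < M)%N -> nu n.+1 \in B n.+1 /\ Ibar nu n (nu n.+1) = Qn B nu n) ->
  forall N th, (N <= M)%N -> inTheta th ->
    ((N < M)%N -> (IWE W x t N (round2 (warped W x t N.+1 th)) th <= Qn B nu N)%N)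
    /\ (LSoS W x t P N th <= Lbar B nu N)%N.
Proof.
move=> _ P_uniq hW _ _ nested nu_argmax N th NM th_in.
pose w k := round2 (warped W x t k th).
have IWE_hits n p : (n <= M)%N -> IWE W x t n p th = hits w n p.
  move=> nM; apply: eq_big_nat => k /andP[k1 kn].
  have kM : (1 <= k <= M)%N by rewrite k1 (leq_trans _ nM) // -ltnS.
  by have [h1 [h2 _]] := hW k th kM th_in; rewrite ind_round2.
have w_in_P k : (1 <= k <= M)%N -> w k \in P
  by move=> kM; have [_ []] := hW k th kM th_in.
have nested_w i j : (1 <= i)%N -> (i < j)%N -> (j <= M)%N ->
    w i = w j -> {subset B i <= B j}.
  exact: nested.
split=> [NM' | ].
  by rewrite IWE_hits // (hits_le_Qn nested_w nu_argmax).
rewrite /LSoS; under eq_bigr => p _ do rewrite (IWE_hits N p NM).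
exact: (sum_sq_hits_le_Lbar nested_w nu_argmax).
Qed.
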